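(* For every integer $n\geq 2$, $$\sum_{k=1}^{n-1}\frac{B_{2k}B_{2n-2k}}{(2k)(2n-2k)}=\sum_{k=1}^{n-1}\frac{B_{2k}B_{2n-2k}}{(2k)(2n-2k)}\binom{2n}{2k}+\frac{B_{2n}}{n}H_{2n}.$$
   Context: $B_n$ denotes the Bernoulli numbers, defined by $\frac{x}{e^x-1}=\sum_{n\ge 0}B_n\frac{x^n}{n!}$ (so $B_0=1$, $B_2=1/6$, $B_4=-1/30,\dots$). $H_i=\sum_{j=1}^i \frac1j$ is the $i$-th harmonic number. *)

From mathcomp Require Import all_boot all_algebra.
Set Implicit Arguments. Unset Strict Implicit. Unset Printing Implicit Defensive.
Import GRing.Theory Num.Theory.
Local Open Scope ring_scope.

(* Bernoulli numbers with x/(e^x-1) = sum B_n x^n/n! (so B_1 = -1/2),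
   characterized by B_0 = 1 and sum_{j=0}^{m} C(m+1,j) B_j = 0 for m >= 1.
   bern_seq m = [:: B_0; ...; B_m]. *)
Fixpoint bern_seq (m : nat) : seq rat :=
  match m with
  | 0 => [:: 1]
  | m'.+1 =>
      let s := bern_seq m' in
      rcons s (- (m'.+2%:R)^-1 *
               \sum_(j < m'.+1) ('C(m'.+2, j))%:R * nth 0 s j)
  end.

Definition bernoulli (n : nat) : rat := nth 0 (bern_seq n) n.

Definition harmonic (i : nat) : rat := \sum_(1 <= j < i.+1) (j%:R)^-1.

(* Let b(x) = x / (e^x - 1) = sum_i B_i x^i / i!.  Whenever t + s = 1,
     x b(tx) b(sx) = b(x) (t s x^2 + s x b(tx) + t x b(sx)),
   which after putting u = e^(tx), v = e^(sx) is the identity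
   1 + 1/(u - 1) + 1/(v - 1) = (uv - 1) / ((u - 1)(v - 1)).  Writing
   b(x) = 1 + x c(x) and cancelling t s x^2, the coefficient of x^(n-1) is an
   identity between polynomials in t; integrating it over [0, 1] with
   int t^j (1 - t)^k = j! k! / (j + k + 1)! (the quotient
   (1 - t^(m+1) - (1 - t)^(m+1)) / (t (1 - t)) integrates to 2 H_m) gives
   Miki's identity
     sum_k B_k B_(n-k) / (k (n-k))
       = sum_k B_k B_(n-k) / (k (n-k)) C(n, k) + B_(n-1) + 2 B_n H_n / n.
   For even n the odd Bernoulli numbers in it vanish, by b(-x) = b(x) + x. *)

From HB Require Import structures.
From mathcomp Require Import all_boot all_algebra.
From mathcomp Require Import ring lra zify.
From Stdlib Require Import Setoid Morphisms.
Import GRing.Theory Num.Theory.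
Local Open Scope ring_scope.

Lemma size_bern_seq m : size (bern_seq m) = m.+1.
Proof. by elim: m => //= m IH; rewrite size_rcons IH. Qed.

Lemma nth_bern_seq m j : (j <= m)%N -> nth 0 (bern_seq m) j = bernoulli j.
Proof.
rewrite /bernoulli; elim: m => [|m IH]; first by rewrite leqn0 => /eqP ->.
rewrite leq_eqVlt => /orP[/eqP -> // | ltjm].
by rewrite /= nth_rcons size_bern_seq ltjm IH.
Qed.

Lemma bernoulli0 : bernoulli 0 = 1. Proof. by []. Qed.

Lemma sum_bin_bernoulli k : \sum_(j < k.+2) 'C(k.+2, j)%:R * bernoulli j = 0.
Proof.
rewrite big_ord_recr /= binSn.
have -> : bernoulli k.+1 =
    - (k.+2%:R)^-1 * \sum_(j < k.+1) 'C(k.+2, j)%:R * bernoulli j.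
  rewrite {1}/bernoulli /= nth_rcons size_bern_seq ltnn eqxx.
  by congr (_ * _); apply: eq_bigr => j _; rewrite nth_bern_seq // -ltnS.
by rewrite mulrA mulrN mulfV ?pnatr_eq0 // mulN1r addrN.
Qed.

Section Factorials.
Variable F : numFieldType.

Lemma natr_fact_neq0 n : (n`!%:R : F) != 0.
Proof. by rewrite pnatr_eq0 -lt0n fact_gt0. Qed.

Lemma invf_fact_mul n j : (j <= n)%N ->
  (j`!%:R : F)^-1 * ((n - j)`!%:R)^-1 = 'C(n, j)%:R / n`!%:R.
Proof.
move=> le_jn; rewrite -(bin_fact le_jn) !natrM.
have nz_bin : ('C(n, j)%:R : F) != 0 by rewrite pnatr_eq0 -lt0n bin_gt0.
by field; rewrite nz_bin !natr_fact_neq0.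
Qed.

End Factorials.

Arguments natr_fact_neq0 {F} n.
Arguments invf_fact_mul {F n j}.

Section TruncatedCongruence.
Context {R : comNzRingType}.
Implicit Types (p q u v : {poly R}) (w : R).

Definition eqmodX N p q := exists r, p - q = r * 'X^N.

#[global] Instance eqmodX_equiv N : Equivalence (eqmodX N).
Proof.
split.
- by move=> p; exists 0; rewrite subrr mul0r.
- by move=> p q [r e]; exists (- r); rewrite mulNr -e opprB.
- by move=> p q u [r1 e1] [r2 e2]; exists (r1 + r2); rewrite mulrDl -e1 -e2 addrA subrK.
Qed.

#[global] Instance eqmodX_add N : Proper (eqmodX N ==> eqmodX N ==> eqmodX N) +%R.
Proof.
by move=> p p' [r1 e1] q q' [r2 e2]; exists (r1 + r2); rewrite mulrDl -e1 -e2; ring.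
Qed.

#[global] Instance eqmodX_opp N : Proper (eqmodX N ==> eqmodX N) -%R.
Proof. by move=> p p' [r e]; exists (- r); rewrite mulNr -e; ring. Qed.

#[global] Instance eqmodX_mul N : Proper (eqmodX N ==> eqmodX N ==> eqmodX N) *%R.
Proof.
move=> p p' [r1 e1] q q' [r2 e2]; exists (r1 * q + p' * r2).
have -> : p = p' + r1 * 'X^N by rewrite -e1; ring.
have -> : q = q' + r2 * 'X^N by rewrite -e2; ring.
ring.
Qed.

Lemma eq_eqmodX N p q : p = q -> eqmodX N p q.
Proof. by move->; reflexivity. Qed.

Lemma eqmodX_coefP N p q : eqmodX N p q <-> forall i, (i < N)%N -> p`_i = q`_i.
Proof.
split=> [[r e] i ltiN | eq_pq].
  by apply/eqP; rewrite -subr_eq0 -coefB e coefMXn ltiN.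
exists (drop_poly N (p - q)); rewrite -[LHS](poly_take_drop N) -[RHS]add0r.
congr (_ + _); apply/polyP => i; rewrite coef_take_poly coef0 coefB.
by case: ifP => // /eq_pq ->; rewrite subrr.
Qed.

Lemma eqmodX_leq M N p q : (M <= N)%N -> eqmodX N p q -> eqmodX M p q.
Proof.
by move=> le_MN /eqmodX_coefP eq_pq; apply/eqmodX_coefP => i ltiM;
  apply: eq_pq; apply: leq_trans le_MN.
Qed.

Lemma eqmodX_mulX2l N p q : eqmodX N.+1 ('X * p) ('X * q) -> eqmodX N p q.
Proof.
move/eqmodX_coefP => eq_pq; apply/eqmodX_coefP => i ltiN.
by have := eq_pq i.+1 ltiN; rewrite !coefXM.
Qed.

Lemma eqmodX_mulIr N p q u v :
  eqmodX N (u * v) 1 -> eqmodX N (p * u) (q * u) -> eqmodX N p q.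
Proof. by move=> uv1 pq; rewrite -[p]mulr1 -[q]mulr1 -uv1 !mulrA pq; reflexivity. Qed.

Definition dilate w : {poly R} -> {poly R} := comp_poly (w%:P * 'X).

HB.instance Definition _ w := GRing.RMorphism.on (dilate w).

Lemma coef_dilate w p i : (dilate w p)`_i = w ^+ i * p`_i.
Proof.
rewrite /dilate coef_comp_poly.
under eq_bigr => j _ do rewrite exprMn -polyC_exp coefCM coefXn mulrA.
case: (ltnP i (size p)) => [ltip | leip].
  rewrite (bigD1 (Ordinal ltip)) //= eqxx mulr1 big1 ?addr0 1?mulrC // => j neqji.
  rewrite (_ : i == j = false) ?mulr0 //.
  by apply: contraNF neqji => /eqP eij; apply/eqP/val_inj.
rewrite nth_default // mulr0 big1 // => j _.
by rewrite eq_sym (ltn_eqF (leq_trans (ltn_ord j) leip)) mulr0.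
Qed.

Lemma dilateX w : dilate w 'X = w%:P * 'X.
Proof. exact: comp_polyX. Qed.

Lemma dilate1 p : dilate 1 p = p.
Proof. by rewrite /dilate mul1r comp_polyXr. Qed.

Lemma dilate0 p : dilate 0 p = (p`_0)%:P.
Proof. by rewrite /dilate mul0r comp_poly0r. Qed.

#[global] Instance eqmodX_dilate N w : Proper (eqmodX N ==> eqmodX N) (dilate w).
Proof.
move=> p q [r e]; exists (dilate w r * (w ^+ N)%:P).
rewrite -rmorphB e rmorphM rmorphXn /= dilateX exprMn -polyC_exp; ring.
Qed.

End TruncatedCongruence.

Arguments eqmodX_leq {R} [M N p q].

Section Integral.
Variable F : numFieldType.
Implicit Types p q : {poly F}.

Definition integral01 p : F := \sum_(i < size p) p`_i / i.+1%:R.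

Lemma integral01E M p : (size p <= M)%N -> integral01 p = \sum_(i < M) p`_i / i.+1%:R.
Proof.
move=> le_pM; rewrite /integral01 (big_ord_widen M (fun i => p`_i / i.+1%:R) le_pM).
rewrite big_mkcond; apply: eq_bigr => i _.
by case: ltnP => // le_pi; rewrite nth_default // mul0r.
Qed.
Arguments integral01E {M p}.

Lemma integral01_is_scalar : scalar integral01.
Proof.
move=> c p q; pose M := maxn (size p) (size q).
have le_pM : (size p <= M)%N by rewrite leq_maxl.
have le_qM : (size q <= M)%N by rewrite leq_maxr.
have le_cpqM : (size (c *: p + q)%R <= M)%N.
  by rewrite (leq_trans (size_polyD _ _)) // geq_max (leq_trans (size_scale_leq _ _)).
rewrite (integral01E le_pM) (integral01E le_qM) (integral01E le_cpqM) mulr_sumr -big_split.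
by apply: eq_bigr => i _; rewrite coefD coefZ mulrDl mulrA.
Qed.

HB.instance Definition _ :=
  GRing.isLinear.Build F {poly F} F *%R integral01 integral01_is_scalar.

Lemma integral01_mulC c p : integral01 (c%:P * p) = c * integral01 p.
Proof. by rewrite mul_polyC linearZ. Qed.

Lemma integral01Xn i : integral01 'X^i = i.+1%:R^-1.
Proof.
rewrite /integral01 size_polyXn big_ord_recr /= big1 ?add0r => [|j _].
  by rewrite coefXn eqxx div1r.
by rewrite coefXn (ltn_eqF (ltn_ord j)) mul0r.
Qed.

Lemma integral01C c : integral01 c%:P = c.
Proof. by rewrite -[c%:P]mulr1 integral01_mulC -(expr0 'X) integral01Xn invr1 mulr1. Qed.

Lemma integral01_beta i j :
  integral01 ('X^i * (1 - 'X) ^+ j) = i`!%:R * j`!%:R / (i + j).+1`!%:R.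
Proof.
elim: j i => [|j IHj] i.
  rewrite expr0 mulr1 integral01Xn addn0 fact0 mulr1 factS natrM.
  by field; rewrite natr_fact_neq0 -mulrS pnatr_eq0.
rewrite exprS mulrCA mulrBl mul1r mulrA -exprS linearB /= !IHj.
rewrite addnS addSn !factS !natrM.
by field; rewrite natr_fact_neq0 -!natrD -mulrS !pnatr_eq0.
Qed.

Lemma integral01_1subXn k : integral01 ((1 - 'X) ^+ k) = k.+1%:R^-1.
Proof.
have := integral01_beta 0 k; rewrite expr0 mul1r => ->.
by rewrite fact0 mul1r add0n factS natrM invfM mulrCA mulfV ?natr_fact_neq0 ?mulr1.
Qed.

End Integral.

Arguments integral01 {F}.

Definition bern_egf i : rat := bernoulli i / i`!%:R.

Lemma bern_egf0 : bern_egf 0 = 1.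
Proof. by rewrite /bern_egf bernoulli0 fact0 divr1. Qed.

Lemma bernoulliE i : bernoulli i = bern_egf i * i`!%:R.
Proof. by rewrite /bern_egf divfK ?natr_fact_neq0. Qed.

(* Power series in x are truncated at x^N, and their coefficients are
   polynomials in an auxiliary variable t, so that the dilations x -> t x and
   x -> (1 - t) x stay inside the ring.  [expm1S] is (e^x - 1)/x, [bernS] is
   b(x) and [bern_tailS] is c(x) = (b(x) - 1)/x. *)
Definition series N (f : nat -> rat) : {poly {poly rat}} := \poly_(i < N) (f i)%:P.

Definition expS N := series N (fun i => (i`!%:R)^-1).
Definition expm1S N := series N (fun i => (i.+1`!%:R)^-1).
Definition bernS N := series N bern_egf.
Definition bern_tailS N := series N (fun i => bern_egf i.+1).

Lemma coef_dilate_series N f (w : {poly rat}) i :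
  (i < N)%N -> (dilate w (series N f))`_i = w ^+ i * (f i)%:P.
Proof. by move=> ltiN; rewrite coef_dilate coef_poly ltiN. Qed.

Lemma bernS_mul_expm1S N : eqmodX N (bernS N * expm1S N) 1.
Proof.
apply/eqmodX_coefP => i ltiN; rewrite coefM coef1.
under eq_bigr => j _ do rewrite !coef_poly (leq_ltn_trans (leq_ord j) ltiN)
  (leq_ltn_trans (leq_subr _ _) ltiN) -polyCM.
rewrite -raddf_sum; case: i ltiN => [|k] _.
  by rewrite big_ord1 /bern_egf bernoulli0 fact0 divr1 mul1r invr1.
rewrite (_ : (k.+1 == 0) = false) // mulr0n -polyC0; congr (_%:P).
transitivity ((k.+2`!%:R)^-1 * \sum_(j < k.+2) 'C(k.+2, j)%:R * bernoulli j);
  last by rewrite sum_bin_bernoulli mulr0.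
rewrite mulr_sumr; apply: eq_bigr => -[j /= ltjk] _.
rewrite /bern_egf -subSn // -mulrA (invf_fact_mul (ltnW ltjk)); ring.
Qed.

Lemma expS_expm1S N : eqmodX N (expS N) (1 + 'X * expm1S N).
Proof.
apply/eqmodX_coefP => -[|i] ltiN; rewrite coefD coef1 coefXM !coef_poly ltiN //.
  by rewrite fact0 invr1 addr0.
by rewrite ltnW // add0r.
Qed.

Lemma bernS_tail N : eqmodX N (bernS N) (1 + 'X * bern_tailS N).
Proof.
apply/eqmodX_coefP => -[|i] ltiN; rewrite coefD coef1 coefXM !coef_poly ltiN //.
  by rewrite /bern_egf bernoulli0 fact0 divr1 addr0.
by rewrite ltnW // add0r.
Qed.

Lemma expS_dilateD N (w1 w2 : {poly rat}) :
  eqmodX N (dilate w1 (expS N) * dilate w2 (expS N)) (dilate (w1 + w2) (expS N)).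
Proof.
apply/eqmodX_coefP => i ltiN; rewrite coefM coef_dilate_series //.
rewrite addrC exprDn mulr_suml; apply: eq_bigr => -[j /= ltji] _; rewrite ltnS in ltji.
rewrite !coef_dilate_series ?(leq_ltn_trans ltji) ?(leq_ltn_trans (leq_subr _ _)) //.
rewrite mulrACA -polyCM invf_fact_mul // polyCM polyC_natr; ring.
Qed.

(* The series [expm1S] inverts [bernS]; multiplying by the inverses of all
   three Bernoulli factors turns the claim into the exponential identity. *)
Lemma bernS_dilate_functional N (w1 w2 : {poly rat}) : w1 + w2 = 1 ->
  eqmodX N ('X * dilate w1 (bernS N) * dilate w2 (bernS N))
    (bernS N * (w1%:P * w2%:P * 'X^2 + w2%:P * 'X * dilate w1 (bernS N)
                + w1%:P * 'X * dilate w2 (bernS N))).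
Proof.
move=> w12; set b := bernS N; set B1 := dilate w1 b; set B2 := dilate w2 b.
pose h := expm1S N; pose H1 := dilate w1 h; pose H2 := dilate w2 h.
have bh : eqmodX N (b * h) 1 := bernS_mul_expm1S N.
have BH w : eqmodX N (dilate w b * dilate w h) 1.
  by rewrite -rmorphM /= bh rmorph1; reflexivity.
have E w : eqmodX N (dilate w (expS N)) (1 + w%:P * 'X * dilate w h).
  by rewrite expS_expm1S rmorphD rmorph1 rmorphM /= dilateX; reflexivity.
have E12 : eqmodX N (dilate w1 (expS N) * dilate w2 (expS N)) (expS N).
  by rewrite expS_dilateD w12 dilate1; reflexivity.
apply: (@eqmodX_mulIr _ N _ _ (H1 * H2 * h) (B1 * B2 * b)).
  have -> : H1 * H2 * h * (B1 * B2 * b) = (B1 * H1) * (B2 * H2) * (b * h) by ring.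
  by rewrite !BH bh !mulr1; reflexivity.
have -> : 'X * B1 * B2 * (H1 * H2 * h) = 'X * h * (B1 * H1) * (B2 * H2) by ring.
have -> : b * (w1%:P * w2%:P * 'X^2 + w2%:P * 'X * B1 + w1%:P * 'X * B2) * (H1 * H2 * h)
    = b * h * (w1%:P * w2%:P * 'X^2 * H1 * H2 + w2%:P * 'X * H2 * (B1 * H1)
               + w1%:P * 'X * H1 * (B2 * H2)) by ring.
rewrite !BH bh !mulr1 mul1r.
transitivity (dilate w1 (expS N) * dilate w2 (expS N) - 1).
  by rewrite E12 expS_expm1S /h; apply: eq_eqmodX; ring.
by rewrite (E w1) (E w2); apply: eq_eqmodX; ring.
Qed.

Lemma coef_dilate_mul_dilate N f g (w1 w2 : {poly rat}) i : (i < N)%N ->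
  (dilate w1 (series N f) * dilate w2 (series N g))`_i
    = \sum_(j < i.+1) (f j * g (i - j)%N)%:P * (w1 ^+ j * w2 ^+ (i - j)).
Proof.
move=> ltiN; rewrite coefM; apply: eq_bigr => -[j /= ltji] _.
rewrite !coef_dilate_series ?(leq_ltn_trans (leq_subr _ _)) ?(leq_trans ltji) //.
by rewrite polyCM; ring.
Qed.

Lemma coef_series_mul_dilate N f g (w : {poly rat}) i : (i < N)%N ->
  (series N f * dilate w (series N g))`_i
    = \sum_(j < i.+1) (f j * g (i - j)%N)%:P * w ^+ (i - j).
Proof.
move=> ltiN; rewrite -[series N f]dilate1 coef_dilate_mul_dilate //.
by apply: eq_bigr => j _; rewrite expr1n mul1r.
Qed.

Definition harm_poly m : {poly rat} := \sum_(j < m) ('X^j + (1 - 'X) ^+ j).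

Lemma mul_harm_poly m :
  'X * (1 - 'X) * harm_poly m = 1 - 'X ^+ m.+1 - (1 - 'X) ^+ m.+1.
Proof.
elim: m => [|m IHm]; first by rewrite /harm_poly big_ord0 mulr0 !expr1 subrr.
by rewrite /harm_poly big_ord_recr /= mulrDr IHm !exprS; ring.
Qed.

Lemma integral01_harm_poly m : integral01 (harm_poly m) = 2 * harmonic m.
Proof.
rewrite /harm_poly linear_sum /harmonic big_add1 /= big_mkord mulr_sumr.
by apply: eq_bigr => j _; rewrite linearD /= integral01Xn integral01_1subXn; ring.
Qed.

(* (c(x) - t c(tx) - (1 - t) c((1 - t) x)) / (t (1 - t)) *)
Definition bern_tail_quot N : {poly {poly rat}} :=
  \poly_(i < N) ((bern_egf i.+1)%:P * harm_poly i).

Section TailIdentity.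
Variable N : nat.
Local Notation t := ('X : {poly rat}).
Local Notation s := (1 - 'X : {poly rat}).
Local Notation b := (bernS N).
Local Notation C := (bern_tailS N).
Local Notation Ct := (dilate t C).
Local Notation Cs := (dilate s C).
Local Notation Q := (bern_tail_quot N).

Lemma bern_tailS_split : eqmodX N (C - t%:P * Ct - s%:P * Cs) (t%:P * s%:P * Q).
Proof.
apply/eqmodX_coefP => i ltiN.
rewrite -polyCM !coefB !coefCM !coef_dilate_series // !coef_poly ltiN.
by rewrite [RHS]mulrCA mul_harm_poly !exprS; ring.
Qed.

Lemma bern_tail_functional_eq :
  eqmodX N (t%:P * s%:P * 'X^2 * ('X * Ct * Cs))
           (t%:P * s%:P * 'X^2 * (Q + b * (1 + Ct + Cs))).
Proof.
have Bt : eqmodX N (dilate t b) (1 + t%:P * 'X * Ct).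
  by rewrite bernS_tail rmorphD rmorph1 rmorphM /= dilateX; reflexivity.
have Bs : eqmodX N (dilate s b) (1 + s%:P * 'X * Cs).
  by rewrite bernS_tail rmorphD rmorph1 rmorphM /= dilateX; reflexivity.
have ts1 : t + s = 1 by rewrite addrC subrK.
transitivity ('X * (1 + t%:P * 'X * Ct) * (1 + s%:P * 'X * Cs) - 'X
              - 'X^2 * (t%:P * Ct + s%:P * Cs)).
  by apply: eq_eqmodX; ring.
rewrite -Bt -Bs (bernS_dilate_functional N _ _ ts1) Bt Bs bernS_tail.
transitivity ('X^2 * (C - t%:P * Ct - s%:P * Cs)
              + t%:P * s%:P * 'X^2 * ((1 + 'X * C) * (1 + Ct + Cs))).
  by apply: eq_eqmodX; rewrite rmorphB rmorph1; ring.
by rewrite bern_tailS_split -bernS_tail; apply: eq_eqmodX; ring.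
Qed.

Lemma bern_tail_coef i : (i.+2 < N)%N ->
  ('X * Ct * Cs)`_i = (Q + b * (1 + Ct + Cs))`_i.
Proof.
move=> ltiN; have nz_ts : t * s != 0.
  by rewrite mulf_neq0 ?polyX_eq0 // -opprB oppr_eq0 -polyC1 polyXsubC_eq0.
apply: (mulfI nz_ts).
have /eqmodX_coefP/(_ i.+2 ltiN) := bern_tail_functional_eq.
by rewrite -polyCM -!(mulrA _%:P 'X^2) !coefCM !coefXnM !subSS subn0; apply.
Qed.

End TailIdentity.

(* The coefficient of x^(p+1) in [bern_tail_coef], integrated over t in [0, 1]. *)
Lemma bern_egf_convolution p :
  \sum_(j < p.+1) bern_egf j.+1 * bern_egf (p - j).+1 * (j`!%:R * (p - j)`!%:R / p.+1`!%:R)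
  = 2 * bern_egf p.+2 * harmonic p.+1 + bern_egf p.+1
    + 2 * \sum_(j < p.+2) bern_egf j * bern_egf (p.+1 - j).+1 / (p.+1 - j).+1%:R.
Proof.
have lt_p1 : (p.+1 < p.+4)%N by lia.
have key := congr1 (@integral01 rat) (@bern_tail_coef p.+4 p.+1 (ltnSn _)).
rewrite -mulrA coefXM /bern_tailS /bernS coef_dilate_mul_dilate ?(ltnW lt_p1) // in key.
rewrite !mulrDr mulr1 !coefD !coef_series_mul_dilate // !coef_poly lt_p1 in key.
rewrite !raddfD !raddf_sum /= in key.
rewrite integral01_mulC integral01_harm_poly integral01C in key; move: key.
under eq_bigr => j _ do rewrite integral01_mulC integral01_beta (subnKC (leq_ord j)).
under [X in _ = _ + (_ + X + _) -> _]eq_bigr => j _ do rewrite integral01_mulC integral01Xn.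
under [X in _ = _ + (_ + X) -> _]eq_bigr => j _ do rewrite integral01_mulC integral01_1subXn.
by move=> ->; ring.
Qed.

Lemma bernS_dilateN1 N : eqmodX N (dilate (-1) (bernS N.+1)) (bernS N.+1 + 'X).
Proof.
set b := bernS N.+1; set h := expm1S N.+1; set e := expS N.+1.
have Hm_e : eqmodX N (dilate (-1) h * e) h.
  apply: eqmodX_mulX2l.
  have Em : eqmodX N.+1 (dilate (-1) e) (1 - 'X * dilate (-1) h).
    rewrite /e expS_expm1S -/h rmorphD rmorph1 rmorphM /= dilateX polyCN polyC1.
    by apply: eq_eqmodX; ring.
  have Eme : eqmodX N.+1 (dilate (-1) e * e) 1.
    have e0 : dilate 0 e = 1 by rewrite dilate0 coef_poly /= fact0 invr1.
    by have := expS_dilateD N.+1 (-1) 1; rewrite addNr dilate1 e0.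
  transitivity ((1 - dilate (-1) e) * e); first by rewrite Em; apply: eq_eqmodX; ring.
  by rewrite mulrBl mul1r Eme /e expS_expm1S -/h; apply: eq_eqmodX; ring.
have bh : eqmodX N (b * h) 1 := eqmodX_leq (leqnSn N) (bernS_mul_expm1S N.+1).
have BHm : eqmodX N (dilate (-1) b * dilate (-1) h) 1.
  by rewrite -rmorphM /= bh rmorph1; reflexivity.
have eN : eqmodX N e (1 + 'X * h) := eqmodX_leq (leqnSn N) (expS_expm1S N.+1).
transitivity (dilate (-1) b * (b * h)); first by rewrite bh mulr1; reflexivity.
rewrite -Hm_e.
transitivity (dilate (-1) b * dilate (-1) h * (b * e)); first by apply: eq_eqmodX; ring.
rewrite BHm eN mul1r; transitivity (b + 'X * (b * h)); first by apply: eq_eqmodX; ring.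
by rewrite bh mulr1; reflexivity.
Qed.

Lemma bernoulli_odd n : odd n -> (1 < n)%N -> bernoulli n = 0.
Proof.
move=> odd_n lt1n.
have /eqmodX_coefP/(_ n (ltnSn n)) := bernS_dilateN1 n.+1.
rewrite coefD coef_dilate coefX !coef_poly (leqnSn n.+1) (gtn_eqF lt1n) addr0.
rewrite -signr_odd odd_n expr1 mulN1r -polyCN => /polyC_inj egf_n.
by rewrite bernoulliE (_ : bern_egf n = 0) ?mul0r //; lra.
Qed.

Lemma sum_bernoulli_prod p :
  \sum_(1 <= k < p.+2) bernoulli k * bernoulli (p.+2 - k) / (k%:R * (p.+2 - k)%:R)
  = p.+1`!%:R * \sum_(j < p.+1) bern_egf j.+1 * bern_egf (p - j).+1
                                 * (j`!%:R * (p - j)`!%:R / p.+1`!%:R).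
Proof.
rewrite big_add1 big_mkord mulr_sumr; apply: eq_bigr => j _.
rewrite subSS (subSn (leq_ord j)) !bernoulliE !factS !natrM.
by field; rewrite natr_fact_neq0 -!mulrS !pnatr_eq0.
Qed.

(* n / (k (n - k)) = 1/k + 1/(n - k), and the sum is symmetric under k -> n - k. *)
Lemma sum_bernoulli_prod_binomial p :
  \sum_(1 <= k < p.+2)
      bernoulli k * bernoulli (p.+2 - k) / (k%:R * (p.+2 - k)%:R) * 'C(p.+2, k)%:R
  = 2 * p.+1`!%:R * \sum_(1 <= k < p.+2) bern_egf k * bern_egf (p.+2 - k) / (p.+2 - k)%:R.
Proof.
pose G k := bern_egf k * bern_egf (p.+2 - k) / (p.+2 - k)%:R.
have G_rev : \sum_(1 <= k < p.+2) G (p.+2 - k)%N = \sum_(1 <= k < p.+2) G k.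
  by rewrite [RHS]big_nat_rev; apply: eq_bigr => k _; rewrite add1n subSS.
transitivity (p.+1`!%:R * \sum_(1 <= k < p.+2) (G k + G (p.+2 - k)%N));
  last by rewrite big_split /= G_rev; ring.
rewrite !big_add1 !big_mkord mulr_sumr; apply: eq_bigr => j _.
move: (nat_of_ord j) (leq_ord j) => {}j le_jp.
have le_jp2 : (j.+1 <= p.+2)%N by lia.
have e1 : (p.+2 - j.+1 = (p - j).+1)%N by lia.
have e2 : (p.+2 - (p - j).+1 = j.+1)%N by lia.
have binE : ('C(p.+2, j.+1)%:R : rat) = p.+2`!%:R / (j.+1`! * (p - j).+1`!)%:R.
  by rewrite -e1 -(bin_fact le_jp2) natrM mulfK // pnatr_eq0 -lt0n muln_gt0 !fact_gt0.
have e3 : (p.+2%:R : rat) = j.+1%:R + (p - j).+1%:R by rewrite -natrD; congr _%:R; lia.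
rewrite /G e1 e2 binE !bernoulliE (factS p.+1) !(natrM _ p.+2) !(natrM _ j.+1`!) e3.
by field; rewrite !natr_fact_neq0 -!mulrS !pnatr_eq0.
Qed.

Lemma miki_identity n : (2 <= n)%N ->
  \sum_(1 <= k < n) bernoulli k * bernoulli (n - k) / (k%:R * (n - k)%:R)
  = \sum_(1 <= k < n)
       bernoulli k * bernoulli (n - k) / (k%:R * (n - k)%:R) * 'C(n, k)%:R
    + bernoulli n.-1 + 2 * bernoulli n / n%:R * harmonic n.
Proof.
case: n => [|[|p]] // _.
have shift : \sum_(j < p.+2) bern_egf j * bern_egf (p.+1 - j).+1 / (p.+1 - j).+1%:R
    = bern_egf p.+2 / p.+2%:R
      + \sum_(1 <= k < p.+2) bern_egf k * bern_egf (p.+2 - k) / (p.+2 - k)%:R.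
  rewrite big_ord_recl subn0 bern_egf0 mul1r big_add1 big_mkord; congr (_ + _).
  by apply: eq_bigr => j _; rewrite lift0 !subSS (subSn (leq_ord j)).
have harmS : harmonic p.+2 = harmonic p.+1 + p.+2%:R^-1 by rewrite /harmonic big_nat_recr.
rewrite sum_bernoulli_prod bern_egf_convolution sum_bernoulli_prod_binomial shift harmS.
rewrite /= (bernoulliE p.+1) (bernoulliE p.+2) (factS p.+1) (natrM _ p.+2).
by field; rewrite -natrD pnatr_eq0.
Qed.

Lemma sum_nat_even (V : nmodType) n (f : nat -> V) :
  (forall k, (k < n)%N -> f (2 * k).+1%N = 0) ->
  \sum_(1 <= k < 2 * n) f k = \sum_(1 <= k < n) f (2 * k)%N.
Proof.
elim: n => [|n IHn] f_odd; first by rewrite !big_geq.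
have f_odd_n : f (2 * n).+1%N = 0 by apply: f_odd.
case: n IHn f_odd f_odd_n => [|n] IHn f_odd f_odd_n.
  by rewrite big_nat1 f_odd_n big_geq.
rewrite mulnS add2n big_nat_recr // big_nat_recr ?muln_gt0 // IHn => [|k lt_kn].
  by rewrite (big_nat_recr n.+1) // f_odd_n; exact: addr0.
by apply: f_odd; apply: leqW.
Qed.

Theorem theorem1p2 (n : nat) (hn : (2 <= n)%N) :
  \sum_(1 <= k < n)
     bernoulli (2 * k) * bernoulli (2 * n - 2 * k)
       / ((2 * k)%:R * (2 * n - 2 * k)%:R)
  = \sum_(1 <= k < n)
     bernoulli (2 * k) * bernoulli (2 * n - 2 * k)
       / ((2 * k)%:R * (2 * n - 2 * k)%:R) * ('C(2 * n, 2 * k))%:R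
    + bernoulli (2 * n) / n%:R * harmonic (2 * n).
Proof.
have odd_double_succ m : odd (2 * m).+1 by rewrite oddS oddM.
have odd_prod k : (k < n)%N ->
    bernoulli (2 * k).+1 * bernoulli (2 * n - (2 * k).+1) = 0.
  case: k => [_ | k _]; last by rewrite bernoulli_odd ?mul0r ?odd_double_succ //; lia.
  rewrite (@bernoulli_odd (2 * n - 1)) ?mulr0 //; last by lia.
  by rewrite (_ : 2 * n - 1 = (2 * n.-1).+1)%N ?odd_double_succ //; lia.
have odd_pred : bernoulli (2 * n).-1 = 0.
  apply: bernoulli_odd; last by lia.
  by rewrite (_ : (2 * n).-1 = (2 * n.-1).+1)%N ?odd_double_succ //; lia.
have le_2_2n : (2 <= 2 * n)%N by lia.
have := miki_identity (2 * n) le_2_2n.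
rewrite !sum_nat_even => [|k /odd_prod->|k /odd_prod->]; rewrite ?mul0r //.
rewrite odd_pred addr0 => ->; congr (_ + _).
have nz_n : (n%:R : rat) != 0 by rewrite pnatr_eq0; lia.
by rewrite natrM; field.
Qed.
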